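(* Let $q$ be a prime power, $n\ge1$ and $L\ge 2$ integers, and $r\in[0,\frac{L}{L+1})$ with $rn\in\mathbb{N}$, such that $n-\lceil\frac{L+1}{L}rn\rceil+1>(L-1)\frac{q}{q-1}$. Then no linear code $C\subseteq\mathbb{F}_q^n$ of dimension $n-\lceil\frac{L+1}{L}rn\rceil+1$ is $(r,L)$ list-decodable.
   Context: A linear $[n,k]_q$ code is a $k$-dimensional subspace of $\mathbb{F}_q^n$. $B_t(v)$ is the Hamming ball of radius $t$ around $v$ (Hamming distance = number of differing coordinates). A code $C\subseteq\mathbb{F}_q^n$ is $(r,L)$ list-decodable if $|B_{rn}(v)\cap C|\le L$ for every $v\in\mathbb{F}_q^n$. *)

From HB Require Import structures.
From mathcomp Require Import all_boot all_order all_algebra all_field.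
Set Implicit Arguments. Unset Strict Implicit. Unset Printing Implicit Defensive.
Import Order.TTheory GRing.Theory Num.Theory.
Local Open Scope ring_scope.

Definition hamming (F : eqType) (n : nat) (u v : 'rV[F]_n) : nat :=
  #|[set i : 'I_n | u 0 i != v 0 i]|.

Definition hball (F : finFieldType) (n : nat) (t : rat) (v : 'rV[F]_n)
  : {set 'rV[F]_n} :=
  [set c : 'rV[F]_n | ((hamming v c)%:R <= t)%R].

Definition list_decodable (F : finFieldType) (n : nat)
  (C : {vspace 'rV[F]_n}) (r : rat) (L : nat) : Prop :=
  forall v : 'rV[F]_n,
    (#|hball (r *+ n) v :&: [set c : 'rV[F]_n | c \in C]| <= L)%N.

(* Put C in systematic form on an information set I, |I| = k, and pick a
   coordinate j0 outside I; let R := I :|: [set j0].  On R, the multiples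
   a *: e d of the systematic rows with e d j0 = 0 are at distance at most 1
   from w = 0, and so are 0 and the rows e d / e d j0 with e d j0 != 0 from
   the unit vector w at j0.  Since k (q - 1) > (L - 1) q, one of the
   two families has L + 1 members.  As ceil((L + 1) rn / L) = n - k + 1, the
   n - k - 1 coordinates outside R contain L + 1 disjoint blocks of size
   n - k - rn; the word equal to w on R and to the i-th codeword on the i-th
   block agrees with each of the L + 1 codewords on at least n - rn
   coordinates. *)

From HB Require Import structures.
From mathcomp Require Import all_boot all_order all_algebra all_field.
From mathcomp Require Import zify.
Import Order.TTheory GRing.Theory Num.Theory.
Local Open Scope ring_scope.
Set Implicit Arguments. Unset Strict Implicit. Unset Printing Implicit Defensive.

Lemma exists_inj_into (D T : finType) (A : {set T}) :
  (#|D| <= #|A|)%N -> exists2 g : D -> T, injective g & forall x, g x \in A.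
Proof.
move=> le_DA; exists (fun x => enum_val (widen_ord le_DA (enum_rank x))).
  by move=> x y /enum_val_inj /(congr1 val) /= /val_inj /enum_rank_inj.
by move=> x; apply: enum_valP.
Qed.

Definition agreement (F : eqType) n (u v : 'rV[F]_n) : {set 'I_n} :=
  [set j | u 0 j == v 0 j].

Lemma hamming_agreement (F : eqType) n (u v : 'rV[F]_n) :
  hamming u v = (n - #|agreement u v|)%N.
Proof.
rewrite /hamming cardsCs card_ord; congr (n - _)%N.
by apply: eq_card => j; rewrite !inE negbK.
Qed.

Definition agree_but_one (F : Type) n (R : {set 'I_n}) (w x : 'rV[F]_n) :=
  exists b, forall j, j \in R -> j != b -> x 0 j = w 0 j.

Lemma exists_common_center (F : eqType) n (D : finType) (R : {set 'I_n})
    (w : 'rV[F]_n) (c : D -> 'rV[F]_n) (u : nat) :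
  (forall i, agree_but_one R w (c i)) -> (#|D| * u <= #|~: R|)%N ->
  exists v : 'rV[F]_n, forall i, (hamming v (c i) <= n - (#|R|.-1 + u))%N.
Proof.
move=> c_near le_DuR.
have [g g_inj gR] : exists2 g : D * 'I_u -> 'I_n, injective g & forall x, g x \in ~: R.
  by apply: exists_inj_into; rewrite card_prod card_ord.
pose v : 'rV[F]_n := \row_j if j \in R then w 0 j
  else if [pick x | g x == j] is Some x then c x.1 0 j else w 0 j.
exists v => i; rewrite hamming_agreement leq_sub2l //.
have [b agree_b] := c_near i.
pose G := [set g (i, p) | p : 'I_u].
have cardG : #|G| = u by rewrite card_imset ?card_ord // => p p' /g_inj [].
have RG0 : (R :\ b) :&: G = set0.
  apply/setP => j; rewrite !inE; apply/negbTE.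
  apply/andP => -[/andP [_ jR] /imsetP [p _ jE]].
  by move: (gR (i, p)); rewrite -jE inE jR.
have subG : (R :\ b) :|: G \subset agreement v (c i).
  apply/subsetP => j; rewrite !inE mxE => /orP [/andP [jb jR] | /imsetP [p _ ->]].
    by rewrite jR agree_b.
  move: (gR (i, p)); rewrite inE => /negbTE ->.
  by case: pickP => [x /eqP /g_inj -> | /(_ (i, p))]; rewrite ?eqxx.
apply: leq_trans (subset_leq_card subG).
rewrite cardsU RG0 cards0 subn0 cardG leq_add2r.
by have := cardsD1 b R; lia.
Qed.

Lemma not_list_decodable_of_close (F : finFieldType) n (C : {vspace 'rV[F]_n})
    (r : rat) (L m : nat) (D : finType) (c : D -> 'rV[F]_n) (v : 'rV[F]_n) :
  r *+ n = m%:R -> injective c -> (forall i, c i \in C) -> #|D| = L.+1 ->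
  (forall i, hamming v (c i) <= m)%N -> ~ list_decodable C r L.
Proof.
move=> rn c_inj cC cardD close /(_ v); apply/negP.
rewrite -ltnNge -cardD -cardsT -(card_imset _ c_inj).
apply/subset_leq_card/subsetP => _ /imsetP [i _ ->].
by rewrite !inE cC andbT rn ler_nat close.
Qed.

Section SystematicBasis.
Variables (F : fieldType) (n : nat).

(* I is an information set and the e d, d \in I, are the rows of a systematic
   generator matrix. *)
Definition systematic_on (I : {set 'I_n}) (e : 'I_n -> 'rV[F]_n) :=
  forall d d', d \in I -> d' \in I -> e d 0 d' = (d == d')%:R.

Lemma systematic_extend (U : {vspace 'rV[F]_n}) I e x :
  systematic_on I e -> (forall d, d \in I -> e d \in U) -> x \notin U ->
  exists d0 e', [/\ d0 \notin I, systematic_on (d0 |: I) e'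
                  & forall d, d \in d0 |: I -> e' d \in (<[x]> + U)%VS].
Proof.
move=> sys eU xU.
have sumU : \sum_(d in I) x 0 d *: e d \in U.
  by apply: memv_suml => d dI; rewrite memvZ ?eU.
pose x' := x - \sum_(d in I) x 0 d *: e d.
have x'I d : d \in I -> x' 0 d = 0.
  move=> dI; rewrite !mxE summxE (bigD1 d) //= !mxE sys // eqxx mulr1.
  rewrite big1 ?addr0 ?subrr // => d' /andP [d'I d'd].
  by rewrite !mxE sys // (negbTE d'd) mulr0.
have [d0 x'd0] : exists d0, x' 0 d0 != 0.
  apply/existsP; apply: contraR xU; rewrite negb_exists => /forallP x'0.
  suff /subr0_eq -> : x' = 0 by [].
  by apply/rowP => j; rewrite [RHS]mxE; apply/eqP/negbNE/x'0.
have d0I : d0 \notin I by apply: contra x'd0 => /x'I ->.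
pose y := (x' 0 d0)^-1 *: x'.
have y_d0 : y 0 d0 = 1 by rewrite /y mxE mulVf.
have yI d : d \in I -> y 0 d = 0 by move=> dI; rewrite /y mxE (x'I d dI) mulr0.
have Ux : {subset U <= <[x]> + U}%VS by apply/subvP/addvSr.
have xUx : x \in (<[x]> + U)%VS by apply: (subvP (addvSl _ _)); apply: memv_line.
have yU : y \in (<[x]> + U)%VS by rewrite memvZ // memvB // Ux.
clearbody y.
exists d0, (fun d => if d == d0 then y else e d - e d 0 d0 *: y); split => //.
  move=> d d'; rewrite !in_setU1.
  case/predU1P => [-> | dI]; case/predU1P => [-> | d'I]; rewrite ?eqxx //.
  - by rewrite yI // eq_sym; case: eqP => // d'd0; rewrite -d'd0 d'I in d0I.
  - have dd0 : d != d0 by apply: contraNneq d0I => <-.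
    by rewrite (negbTE dd0) !mxE y_d0 mulr1 subrr.
  - have dd0 : d != d0 by apply: contraNneq d0I => <-.
    by rewrite (negbTE dd0) !mxE yI // mulr0 subr0 sys.
move=> d; case: eqP => [_ _ | dd0]; first exact: yU.
rewrite in_setU1 => /predU1P [// | dI].
by rewrite memvB ?memvZ // Ux ?eU.
Qed.

Lemma span_systematic (b : seq 'rV[F]_n) : free b ->
  exists (I : {set 'I_n}) (e : 'I_n -> 'rV[F]_n),
    [/\ #|I| = size b, systematic_on I e & forall d, d \in I -> e d \in <<b>>%VS].
Proof.
elim: b => [_ | x b IH].
  by exists set0, (fun=> 0); split=> [| d d' | d]; rewrite ?cards0 ?inE.
rewrite free_cons span_cons => /andP [xb /IH [I [e [cardI sys eb]]]].
have [d0 [e' [d0I sys' e'b]]] := systematic_extend sys eb xb.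
by exists (d0 |: I), e'; rewrite cardsU1 d0I cardI.
Qed.

Lemma exists_systematic_basis (C : {vspace 'rV[F]_n}) :
  exists (I : {set 'I_n}) (e : 'I_n -> 'rV[F]_n),
    [/\ #|I| = \dim C, systematic_on I e & forall d, d \in I -> e d \in C].
Proof.
have [I [e [cardI sys eC]]] := span_systematic (basis_free (vbasisP C)).
exists I, e; split=> //; first by rewrite cardI size_tuple.
by rewrite -(span_basis (vbasisP C)).
Qed.

End SystematicBasis.

Section ScaledSystematic.
Variables (F : fieldType) (n : nat) (I : {set 'I_n}) (e : 'I_n -> 'rV[F]_n).
Hypothesis sys : systematic_on I e.

Lemma scaled_systematic_inj d d' a a' :
  d \in I -> d' \in I -> a != 0 -> a *: e d = a' *: e d' -> (d, a) = (d', a').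
Proof.
move=> dI d'I a0 /(congr1 (fun x : 'rV_n => x 0 d)); rewrite !mxE !sys // eqxx mulr1.
have [-> | d'd] := eqVneq d' d; first by rewrite mulr1 => ->.
by rewrite mulr0 => a_0; rewrite a_0 eqxx in a0.
Qed.

Lemma oapp_scaled_systematic_inj (D : Type) (p : D -> 'I_n * F) :
  injective p -> (forall i, (p i).1 \in I /\ (p i).2 != 0) ->
  injective (oapp (fun i => (p i).2 *: e (p i).1) 0).
Proof.
move=> p_inj p_ok.
have scaled_neq0 i : (p i).2 *: e (p i).1 != 0.
  have [pI pa] := p_ok i; apply/eqP; rewrite -(scale0r (e (p i).1)).
  by move/(scaled_systematic_inj pI pI pa) => [/eqP]; rewrite (negbTE pa).
move=> [i|] [i'|] //= eq_ii'.
- have [pI pa] := p_ok i; have [p'I _] := p_ok i'.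
  have := scaled_systematic_inj pI p'I pa eq_ii'.
  by rewrite -!surjective_pairing => /p_inj ->.
- by move: (scaled_neq0 i); rewrite eq_ii' eqxx.
- by move: (scaled_neq0 i'); rewrite -eq_ii' eqxx.
Qed.

Lemma scaled_systematic_agree_but_one (j0 : 'I_n) (w : 'rV[F]_n) d a :
  d \in I -> (forall j, j \in I -> w 0 j = 0) -> w 0 j0 = a * e d 0 j0 ->
  agree_but_one (j0 |: I) w (a *: e d).
Proof.
move=> dI wI wj0; exists d => j; rewrite in_setU1 mxE => /predU1P [-> // | jI jd].
by rewrite sys // eq_sym (negbTE jd) mulr0 wI.
Qed.

End ScaledSystematic.

Lemma leq_split_count (k z L q : nat) :
  (z <= k)%N -> ((L.-1) * q < k * q.-1)%N -> (L <= z * q.-1)%N || (L <= k - z)%N.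
Proof. by move=> zk; apply: contraLR; rewrite negb_or -!ltnNge; nia. Qed.

Section CloseFamily.
Variables (F : finFieldType) (n L : nat) (C : {vspace 'rV[F]_n}).
Variables (I : {set 'I_n}) (e : 'I_n -> 'rV[F]_n) (j0 : 'I_n).
Hypotheses (sys : systematic_on I e) (eC : forall d, d \in I -> e d \in C).
Hypothesis j0I : j0 \notin I.

Let Z := [set d in I | e d 0 j0 == 0].

Definition close_family (w : 'rV[F]_n) :=
  exists2 c : option 'I_L -> 'rV[F]_n, injective c
    & forall o, c o \in C /\ agree_but_one (j0 |: I) w (c o).

Lemma close_family_at_zero : (L <= #|Z| * #|F|.-1)%N -> close_family 0.
Proof.
move=> leLZ; pose T := setX Z [set~ 0 : F].
have [p p_inj pT] : exists2 p : 'I_L -> 'I_n * F, injective p & forall i, p i \in T.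
  by apply: exists_inj_into; rewrite card_ord cardsX cardsC1.
have pZ i : [/\ (p i).1 \in I, e (p i).1 0 j0 = 0 & (p i).2 != 0].
  by move: (pT i); rewrite !inE => /andP [/andP [-> /eqP ->] ->].
exists (oapp (fun i => (p i).2 *: e (p i).1) 0).
  by apply: (oapp_scaled_systematic_inj sys p_inj) => i; have [] := pZ i.
case=> [i|] /=; last by split; [apply: mem0v | exists j0].
have [pI pj0 pa] := pZ i; split; first by rewrite memvZ ?eC.
by apply: (scaled_systematic_agree_but_one sys) => // [j _|]; rewrite mxE ?pj0 ?mulr0.
Qed.

Lemma close_family_at_delta : (L <= #|I :\: Z|)%N -> close_family (delta_mx 0 j0).
Proof.
move=> leLZ.
have [g g_inj gT] : exists2 g : 'I_L -> 'I_n, injective g & forall i, g i \in I :\: Z.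
  by apply: exists_inj_into; rewrite card_ord.
have gZ i : g i \in I /\ e (g i) 0 j0 != 0.
  by move: (gT i); rewrite !inE => /andP [+ gI]; rewrite gI.
pose p i := (g i, (e (g i) 0 j0)^-1).
exists (oapp (fun i => (p i).2 *: e (p i).1) 0).
  apply: (oapp_scaled_systematic_inj sys) => [i i' [/g_inj] // | i].
  by have [gI ej0] := gZ i; rewrite invr_eq0.
case=> [i|] /=; last first.
  split; first exact: mem0v.
  by exists j0 => j _ jj0; rewrite !mxE (negbTE jj0) andbF.
have [gI ej0] := gZ i; split; first by rewrite memvZ ?eC.
apply: (scaled_systematic_agree_but_one sys) => // [j jI|]; rewrite mxE ?mulVf ?eqxx //.
by have -> : (j == j0) = false by apply: contraNF j0I => /eqP <-.
Qed.

Lemma exists_close_family :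
  ((L.-1) * #|F| < #|I| * #|F|.-1)%N -> exists w, close_family w.
Proof.
have ZI : Z \subset I by apply/subsetP => d; rewrite inE => /andP [].
move=> /(leq_split_count (subset_leq_card ZI)) /orP [leLZ | leLZ].
  by exists 0; apply: close_family_at_zero.
by exists (delta_mx 0 j0); apply: close_family_at_delta; rewrite cardsD (setIidPr ZI).
Qed.

End CloseFamily.

Lemma ceil_mul_ratio_bounds (R : archiRealFieldType) (a b m : nat) (s : int) :
  (0 < b)%N -> s = Num.ceil (a%:R / b%:R * m%:R : R) ->
  (a * m)%:Z <= b%:Z * s /\ b%:Z * (s - 1) < (a * m)%:Z.
Proof.
move=> b0 ->; have b0' : 0 < b%:R :> R by rewrite ltr0n.
have -> : a%:R / b%:R * m%:R = b%:R^-1 * (a * m)%:R :> R.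
  by rewrite natrM mulrAC mulrC.
rewrite -(ler_int R) -(ltr_int R) !intrM -ler_pdivrMl // -ltr_pdivlMl //.
by rewrite ceil_ge ceilB1_lt.
Qed.

Lemma ceil_codim_bounds (k n L m : nat) : (0 < L)%N -> (k <= n)%N ->
  k%:Z = n%:Z - Num.ceil ((L.+1)%:R / L%:R * (m%:R : rat)) + 1 ->
  (k < n)%N /\ (L.+1 * (n - k - m) <= n - k.+1)%N.
Proof.
move=> L0 kn dimk.
have [] := @ceil_mul_ratio_bounds rat L.+1 L m _ L0 (erefl _).
move: dimk; set s := Num.ceil _ => dimk lo hi.
have sE : s = (n - k).+1%:Z by lia.
have sB1 : s - 1 = (n - k)%:Z by rewrite sE -addn1 PoszD addrK.
rewrite sE -!PoszM lez_nat in lo; rewrite sB1 -!PoszM ltz_nat in hi.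
rewrite -subn_gt0 subnS; clear -lo hi; move: (n - k)%N lo hi => d lo hi; split.
  case: d lo hi => // lo; rewrite muln0 muln_gt0 => /andP [_ m0].
  by have := leq_pmulr L.+1 m0; rewrite muln1 in lo; lia.
have [dm | md] := leqP d m; first by rewrite (eqP dm) muln0.
nia.
Qed.

Lemma ltn_mul_of_lt_mul_div (R : numFieldType) (a b c d : nat) :
  (0 < d)%N -> a%:R * (b%:R / d%:R) < c%:R :> R -> (a * b < c * d)%N.
Proof. by move=> d0; rewrite mulrA ltr_pdivrMr ?ltr0n // -!natrM ltr_nat. Qed.

Unset Implicit Arguments.

Theorem lemma3p5 (F : finFieldType) (n L : nat) (r : rat)
  (hn : (1 <= n)%N) (hL : (2 <= L)%N)
  (hr0 : 0 <= r) (hr1 : r < L%:R / (L.+1)%:R)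
  (hrn : exists m : nat, r *+ n = m%:R)
  (hk : (n%:Z - Num.ceil ((L.+1)%:R / L%:R * (r *+ n)) + 1)%:~R
          > (L.-1)%:R * (#|F|%:R / (#|F|.-1)%:R) :> rat) :
  forall C : {vspace 'rV[F]_n},
    (\dim C)%:Z = n%:Z - Num.ceil ((L.+1)%:R / L%:R * (r *+ n)) + 1 ->
    ~ list_decodable C r L.
Proof.
move=> C dimC; have [m rn_m] := hrn; rewrite rn_m in hk dimC.
have [I [e [cardI sys eC]]] := exists_systematic_basis C.
have k_le_n : (\dim C <= n)%N.
  by rewrite -cardI; apply: leq_trans (max_card _) _; rewrite card_ord.
have [k_lt_n blocks_fit] := ceil_codim_bounds (ltnW hL) k_le_n dimC.
have [j0 j0I] : exists j0, j0 \notin I.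
  have : (0 < #|~: I|)%N by rewrite cardsCs setCK card_ord cardI subn_gt0.
  by rewrite card_gt0 => /set0Pn [j0]; rewrite inE; exists j0.
have q1_gt0 : (0 < #|F|.-1)%N by rewrite -subn1 subn_gt0 card_finNzRing_gt1.
have q_bound : ((L.-1) * #|F| < #|I| * #|F|.-1)%N.
  rewrite cardI; apply: (ltn_mul_of_lt_mul_div (R := rat) q1_gt0).
  by rewrite -dimC in hk.
have [w [c c_inj c_close]] := exists_close_family sys eC j0I q_bound.
have cardR : #|j0 |: I| = (\dim C).+1 by rewrite cardsU1 j0I cardI.
have cardD : #|{: option 'I_L}| = L.+1 by rewrite card_option card_ord.
have blocks_le : (#|{: option 'I_L}| * (n - \dim C - m) <= #|~: (j0 |: I)|)%N.
  by rewrite cardD cardsCs setCK card_ord cardR.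
have [v v_close] := exists_common_center (fun o => (c_close o).2) blocks_le.
apply: (not_list_decodable_of_close rn_m c_inj (fun o => (c_close o).1) cardD) => o.
by apply: leq_trans (v_close o) _; rewrite cardR; lia.
Qed.
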